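(* Let $K\in\mathbb{N}$, $\gamma>0$, and let $h\colon\mathbb{R}^K\to\mathbb{R}\cup\{+\infty\}$, $h(\alpha)=\|\alpha\|_0+\iota_{\Delta_K}(\alpha)$. Let $\alpha\in\Delta_K$ with $\alpha_1\le\cdots\le\alpha_K$. Then: (i) An element $\hat\alpha\in\operatorname{prox}_{\gamma h}(\alpha)$ is given by $\hat\alpha_J=0$ and $\hat\alpha_{J^c}=\alpha_{J^c}+\frac{1}{|J^c|}\sum_{k\in J}\alpha_k$, where $J=[K_0]=\{1,\dots,K_0\}$, $J^c=[K]\setminus J$, and $$K_0\in\operatorname*{argmin}_{n\in\{0,\dots,K-1\}} g(n),\qquad g(n)=\frac{1}{2\gamma}\frac{\big(\sum_{k=1}^n\alpha_k\big)^2}{K-n}+\frac{1}{2\gamma}\sum_{k=1}^n\alpha_k^2-n.$$ (ii) If $\alpha_i=0$ for some $i\in\{1,\dots,K\}$, then $\hat\alpha_i=0$ for every $\hat\alpha\in\operatorname{prox}_{\gamma h}(\alpha)$.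
   Context: $\Delta_K=\{\alpha\in\mathbb{R}^K_{\ge0}:\sum_{k=1}^K\alpha_k=1\}$ is the probability simplex; $\|\alpha\|_0=|\{k:\alpha_k>0\}|$; $\iota_{\Delta_K}(\alpha)=0$ if $\alpha\in\Delta_K$ and $+\infty$ otherwise. For a proper lower semicontinuous $g\colon\mathbb{R}^K\to\mathbb{R}\cup\{+\infty\}$ and $\gamma>0$, the (possibly set-valued) proximal operator is $\operatorname{prox}_{\gamma g}(x)=\operatorname*{argmin}_{y\in\mathbb{R}^K}\{\frac{1}{2\gamma}\|x-y\|^2+g(y)\}$, with $\|\cdot\|$ the Euclidean norm. For $J\subseteq[K]$, $\alpha_J=(\alpha_k)_{k\in J}$; $[0]=\emptyset$. *)

From HB Require Import structures.
From mathcomp Require Import all_boot all_order all_algebra.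
From mathcomp Require Import boolp reals constructive_ereal.
Set Implicit Arguments. Unset Strict Implicit. Unset Printing Implicit Defensive.
Import Order.TTheory GRing.Theory Num.Theory.
Local Open Scope ring_scope.

Section Defs.
Variable R : realType.

Definition in_simplex (K : nat) (a : 'I_K -> R) : Prop :=
  (forall k, 0 <= a k) /\ \sum_(k < K) a k = 1.

Definition l0 (K : nat) (a : 'I_K -> R) : nat := #|[set k | 0 < a k]|.

Definition h_l0_simplex (K : nat) (a : 'I_K -> R) : \bar R :=
  if `[< in_simplex a >] then ((l0 a)%:R)%:E else +oo%E.

Definition sqdist (K : nat) (x y : 'I_K -> R) : R :=
  \sum_(k < K) (x k - y k) ^+ 2.

Definition in_prox (K : nat) (gamma : R) (g : ('I_K -> R) -> \bar R)
    (x y : 'I_K -> R) : Prop :=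
  forall z : 'I_K -> R,
    ((sqdist x y / (2 * gamma))%:E + g y <= (sqdist x z / (2 * gamma))%:E + g z)%E.

(* g(n) from the statement (alpha_1..alpha_n are the indices k < n, 0-based) *)
Definition gfun (K : nat) (gamma : R) (a : 'I_K -> R) (n : nat) : R :=
  (\sum_(k < K | (k < n)%N) a k) ^+ 2 / (K - n)%:R / (2 * gamma)
  + (\sum_(k < K | (k < n)%N) a k ^+ 2) / (2 * gamma) - n%:R.

Definition prox_candidate (K : nat) (a : 'I_K -> R) (K0 : nat) : 'I_K -> R :=
  fun k => if (k < K0)%N then 0
           else a k + (\sum_(j < K | (j < K0)%N) a j) / (K - K0)%:R.

End Defs.

(* Let z be a point of the simplex with support S, and n = K - |S|. On S, z must
   carry the mass that a puts outside S, so by Cauchy-Schwarz on S,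
   ||a - z||^2 >= sum_{k notin S} a_k^2 + (sum_{k notin S} a_k)^2 / |S|; as a is
   nonnegative and sorted, this is at least the same expression over the n
   smallest coordinates. Hence the objective at z is at least g(n) + K, while the
   candidate built from K0 attains at most g(K0) + K.
   For (ii), if a_i = 0 < y_i, some j has y_j < a_j; moving the mass y_i from i to
   j stays in the simplex, does not enlarge the support and strictly decreases the
   distance to a. *)

From HB Require Import structures.
From mathcomp Require Import all_boot all_order all_algebra.
From mathcomp Require Import boolp reals constructive_ereal.
From mathcomp Require Import ring lra zify.
Set Implicit Arguments. Unset Strict Implicit. Unset Printing Implicit Defensive.
Import Order.TTheory GRing.Theory Num.Theory.
Local Open Scope ring_scope.

Lemma card_ord_lt (K n : nat) : (n <= K)%N -> #|[set k : 'I_K | (k < n)%N]| = n.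
Proof.
move=> nK; rewrite -sum1_card.
rewrite (eq_bigl (fun k : 'I_K => true && (k < n)%N)); last by move=> k; rewrite inE.
by rewrite -(big_ord_widen_cond K (fun _ => true) (fun _ => 1%N) nK) sum1_card card_ord.
Qed.

Lemma card_ord_geq (K n : nat) : (n <= K)%N -> #|~: [set k : 'I_K | (k < n)%N]| = (K - n)%N.
Proof.
move=> nK; have := cardsC [set k : 'I_K | (k < n)%N].
rewrite card_ord_lt // card_ord; lia.
Qed.

Section Sums.
Variable R : realFieldType.

Lemma sum_setC_split (I : finType) (S : {set I}) (F : I -> R) :
  \sum_i F i = \sum_(i in S) F i + \sum_(i in ~: S) F i.
Proof.
rewrite (bigID (mem S)) /=; congr (_ + _).
by apply: eq_bigl => i; rewrite in_setC.
Qed.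

Lemma sum_ord_geq_const (K n : nat) (c : R) : (n <= K)%N ->
  \sum_(k < K | ~~ (k < n)%N) c = c *+ (K - n).
Proof.
move=> nK; rewrite -card_ord_geq // -sumr_const.
by apply: eq_bigl => k; rewrite !inE.
Qed.

Lemma sum_prefix_le_sum_set (K n : nat) (f : 'I_K -> R) (A : {set 'I_K}) :
  (forall i j : 'I_K, (i <= j)%N -> f i <= f j) -> #|A| = n ->
  \sum_(k < K | (k < n)%N) f k <= \sum_(k in A) f k.
Proof.
move=> f_mono cardA; case: n cardA => [|n] cardA.
  rewrite big_pred0 // (_ : A = set0) ?big_set0 //.
  by apply/eqP; rewrite -cards_eq0 cardA.
have nK : (n < K)%N by move: (max_card A); rewrite cardA card_ord.
set B := [set k : 'I_K | (k < n.+1)%N].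
have -> : \sum_(k < K | (k < n.+1)%N) f k = \sum_(k in B) f k.
  by apply: eq_bigl => k; rewrite inE.
rewrite (big_setID A) [X in _ <= X](big_setID B) /= setIC lerD2l.
have cardBA : #|B :\: A| = #|A :\: B| by rewrite !cardsD cardA card_ord_lt // setIC.
(* f at the threshold n separates the indices of B :\: A from those of A :\: B *)
pose t := f (Ordinal nK).
apply: (@le_trans _ _ (t *+ #|A :\: B|)).
  rewrite -cardBA -sumr_const; apply: ler_sum => k; rewrite !inE => /andP[_ kn].
  by apply: f_mono => /=; rewrite -ltnS.
rewrite -sumr_const; apply: ler_sum => k; rewrite !inE => /andP[kn _].
by apply: f_mono; move: kn; rewrite -leqNgt => /ltnW.
Qed.

Lemma sqr_sum_div_card_le (I : finType) (S : {set I}) (d : I -> R) :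
  (\sum_(k in S) d k) ^+ 2 / #|S|%:R <= \sum_(k in S) d k ^+ 2.
Proof.
have sqr_sum_ge0 : 0 <= \sum_(k in S) d k ^+ 2 by apply: sumr_ge0 => k _; apply: sqr_ge0.
have [->|S_gt0] := posnP #|S|; first by rewrite invr0 mulr0.
set T := \sum_(k in S) d k; set m : R := #|S|%:R.
have m_gt0 : 0 < m by rewrite ltr0n.
have expand c : \sum_(k in S) (d k - c) ^+ 2 =
    \sum_(k in S) d k ^+ 2 - 2 * c * T + c ^+ 2 * m.
  rewrite mulr_natr mulr_sumr -sumr_const -sumrB -big_split /=.
  by apply: eq_bigr => k _; ring.
have : 0 <= \sum_(k in S) (d k - T / m) ^+ 2.
  by apply: sumr_ge0 => k _; apply: sqr_ge0.
have -> : T ^+ 2 / m = 2 * (T / m) * T - (T / m) ^+ 2 * m by field; rewrite gt_eqF.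
rewrite expand; lra.
Qed.

Lemma exists_ltr_of_sum_eq (I : finType) (x y : I -> R) (i : I) :
  \sum_k x k = \sum_k y k -> x i < y i -> exists j, y j < x j.
Proof.
move=> sum_xy xy_i; case: (pickP (fun j => y j < x j)) => [j yx_j | yx]; first by exists j.
suff : \sum_k x k < \sum_k y k by rewrite sum_xy ltxx.
rewrite (bigD1 i) // [X in _ < X](bigD1 i) //=.
by apply: ltr_leD => //; apply: ler_sum => k _; rewrite leNgt yx.
Qed.

End Sums.

Section L0SimplexProx.
Variables (R : realType) (K : nat).
Implicit Types (a x y z : 'I_K -> R) (gamma : R).

Definition l0_objective gamma x y : R := sqdist x y / (2 * gamma) + (l0 y)%:R.

Lemma in_prox_l0_simplexP gamma x y : in_simplex x ->
  in_prox gamma (@h_l0_simplex R K) x y <->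
  in_simplex y /\ forall z, in_simplex z -> l0_objective gamma x y <= l0_objective gamma x z.
Proof.
rewrite /in_prox /h_l0_simplex => sx; split => [prox_y | [sy min_y] z].
  have sy : in_simplex y.
    apply/asboolP; apply: contraTT (prox_y x) => /negbTE ->.
    by rewrite (asboolT sx) addey // leye_eq -EFinD.
  split=> // z sz; have := prox_y z.
  by rewrite (asboolT sy) (asboolT sz) -!EFinD lee_fin.
rewrite (asboolT sy); case: (asboolP (in_simplex z)) => [sz | _].
  by rewrite -!EFinD lee_fin; apply: min_y.
by rewrite addey // leey.
Qed.

Lemma l0_simplex_gt0 z : in_simplex z -> (0 < l0 z)%N.
Proof.
case=> z_ge0 sum_z; rewrite lt0n cards_eq0; apply/negP => /eqP supp0.
move: sum_z; rewrite big1 => [/eqP | k _]; first by rewrite eq_sym oner_eq0.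
apply/eqP; rewrite eq_le z_ge0 andbT leNgt.
by apply/negP => zk; move: (in_set0 k); rewrite -supp0 inE zk.
Qed.

Lemma l0_le_dim z : (l0 z <= K)%N.
Proof. by have := max_card [set k | 0 < z k]; rewrite card_ord. Qed.

Section Candidate.
Variables (a : 'I_K -> R) (K0 : nat).
Hypothesis K0_lt_K : (K0 < K)%N.
Let K0_le_K : (K0 <= K)%N := ltnW K0_lt_K.

Lemma prox_candidate_simplex : in_simplex a -> in_simplex (prox_candidate a K0).
Proof.
case=> a_ge0 sum_a; rewrite /prox_candidate.
set T0 := \sum_(j < K | (j < K0)%N) a j; set m : R := (K - K0)%:R.
have m_gt0 : 0 < m by rewrite ltr0n subn_gt0.
split=> [k | ].
  case: ifP => _ //; apply: addr_ge0 => //; apply: divr_ge0; last exact: ltW.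
  by apply: sumr_ge0 => j _.
rewrite (bigID (fun k : 'I_K => (k < K0)%N)) /= big1 ?add0r; last by move=> k kK0; rewrite kK0.
rewrite (eq_bigr (fun k => a k + T0 / m)); last by move=> k /negbTE kK0; rewrite kK0.
rewrite big_split /= sum_ord_geq_const // -mulr_natr mulfVK ?gt_eqF //.
by rewrite -sum_a [RHS](bigID (fun k : 'I_K => (k < K0)%N)) /= addrC.
Qed.

Lemma sqdist_prox_candidate :
  sqdist a (prox_candidate a K0) = \sum_(k < K | (k < K0)%N) a k ^+ 2 +
    (\sum_(k < K | (k < K0)%N) a k) ^+ 2 / (K - K0)%:R.
Proof.
rewrite /sqdist /prox_candidate (bigID (fun k : 'I_K => (k < K0)%N)) /=.
set T0 := \sum_(j < K | (j < K0)%N) a j; set m : R := (K - K0)%:R.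
have m_gt0 : 0 < m by rewrite ltr0n subn_gt0.
congr (_ + _); first by apply: eq_bigr => k kK0; rewrite kK0 subr0.
rewrite (eq_bigr (fun k => (T0 / m) ^+ 2)); last first.
  by move=> k /negbTE kK0; rewrite kK0 opprD addrA subrr sub0r sqrrN.
by rewrite sum_ord_geq_const // -mulr_natr; field; rewrite gt_eqF.
Qed.

Lemma l0_prox_candidate : (l0 (prox_candidate a K0) <= K - K0)%N.
Proof.
rewrite /l0 -card_ord_geq //; apply: subset_leq_card.
by apply/subsetP => k; rewrite !inE /prox_candidate; case: ifP; rewrite ?ltxx.
Qed.

Lemma l0_objective_prox_candidate gamma : 0 < gamma ->
  l0_objective gamma a (prox_candidate a K0) <= gfun gamma a K0 + K%:R.
Proof.
move=> gamma_gt0; rewrite /l0_objective /gfun sqdist_prox_candidate mulrDl.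
have : (l0 (prox_candidate a K0))%:R <= K%:R - K0%:R :> R.
  by rewrite -natrB ?ler_nat ?l0_prox_candidate.
lra.
Qed.

End Candidate.

Lemma sqdist_ge_support a z (S : {set 'I_K}) :
  (forall k, k \notin S -> z k = 0) -> \sum_k z k = \sum_k a k ->
  \sum_(k in ~: S) a k ^+ 2 + (\sum_(k in ~: S) a k) ^+ 2 / #|S|%:R <= sqdist a z.
Proof.
move=> z_supp sum_za.
have sum_out : \sum_(k in ~: S) (a k - z k) ^+ 2 = \sum_(k in ~: S) a k ^+ 2.
  by apply: eq_bigr => k; rewrite in_setC => /z_supp ->; rewrite subr0.
have sum_in : \sum_(k in S) (a k - z k) = - \sum_(k in ~: S) a k.
  rewrite sumrB; have := sum_za; rewrite !(sum_setC_split S).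
  rewrite [X in _ + X](big1 _ _ (fun k => _)) ?addr0 => [-> | k]; first by ring.
  by rewrite in_setC => /z_supp.
rewrite /sqdist (sum_setC_split S) sum_out addrC lerD2r -sqrrN -sum_in.
exact: sqr_sum_div_card_le.
Qed.

Lemma sqdist_ge_prefix a z (S : {set 'I_K}) (n : nat) :
  (forall k, 0 <= a k) -> (forall i j : 'I_K, (i <= j)%N -> a i <= a j) ->
  (forall k, k \notin S -> z k = 0) -> \sum_k z k = \sum_k a k -> #|~: S| = n ->
  \sum_(k < K | (k < n)%N) a k ^+ 2 + (\sum_(k < K | (k < n)%N) a k) ^+ 2 / #|S|%:R
    <= sqdist a z.
Proof.
move=> a_ge0 a_mono z_supp sum_za cardSC.
apply: le_trans (sqdist_ge_support z_supp sum_za); apply: lerD.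
  apply: sum_prefix_le_sum_set cardSC => i j ij.
  by rewrite ler_sqr ?nnegrE ?a_mono.
rewrite ler_wpM2r ?invr_ge0 ?ler0n // ler_sqr ?nnegrE ?sumr_ge0 //.
exact: sum_prefix_le_sum_set.
Qed.

Lemma gfun_le_l0_objective gamma a z : 0 < gamma ->
  (forall k, 0 <= a k) -> (forall i j : 'I_K, (i <= j)%N -> a i <= a j) ->
  \sum_k a k = 1 -> in_simplex z ->
  gfun gamma a (K - l0 z) + K%:R <= l0_objective gamma a z.
Proof.
move=> gamma_gt0 a_ge0 a_mono sum_a [z_ge0 sum_z].
set S := [set k | 0 < z k].
have z_supp k : k \notin S -> z k = 0.
  by rewrite inE => /negbTE zk; apply/eqP; rewrite eq_le z_ge0 andbT leNgt zk.
have cardSC : #|~: S| = (K - #|S|)%N by have := cardsC S; rewrite card_ord; lia.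
have := sqdist_ge_prefix a_ge0 a_mono z_supp (etrans sum_z (esym sum_a)) cardSC.
rewrite -(ler_pM2r (_ : 0 < (2 * gamma)^-1)) ?invr_gt0 ?mulr_gt0 // mulrDl.
rewrite /l0_objective /gfun /l0 -/S subKn ?l0_le_dim // natrB ?l0_le_dim //; lra.
Qed.

Lemma in_prox_prox_candidate gamma a K0 : 0 < gamma -> in_simplex a ->
  (forall i j : 'I_K, (i <= j)%N -> a i <= a j) -> (K0 < K)%N ->
  (forall n, (n < K)%N -> gfun gamma a K0 <= gfun gamma a n) ->
  in_prox gamma (@h_l0_simplex R K) a (prox_candidate a K0).
Proof.
move=> gamma_gt0 sa a_mono K0_lt_K gfun_min; apply/in_prox_l0_simplexP => //.
split=> [|z sz]; first exact: prox_candidate_simplex.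
apply: le_trans (l0_objective_prox_candidate a K0_lt_K gamma_gt0) _.
have [a_ge0 sum_a] := sa.
apply: le_trans (gfun_le_l0_objective gamma_gt0 a_ge0 a_mono sum_a sz).
by rewrite lerD2r gfun_min // -subn_gt0 subKn ?l0_simplex_gt0 ?l0_le_dim.
Qed.

Definition transfer_mass y (i j : 'I_K) : 'I_K -> R :=
  fun k => if k == i then 0 else if k == j then y j + y i else y k.

Section TransferMass.
Variables (y : 'I_K -> R) (i j : 'I_K).
Hypothesis j_neq_i : j != i.

Let sum_split2 (F : 'I_K -> R) :
  \sum_k F k = F i + (F j + \sum_(k | (k != i) && (k != j)) F k).
Proof. by rewrite (bigD1 i) //= (bigD1 j). Qed.

Let transfer_mass_other k : (k != i) && (k != j) -> transfer_mass y i j k = y k.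
Proof. by case/andP => /negbTE ki /negbTE kj; rewrite /transfer_mass ki kj. Qed.

Let transfer_mass_i : transfer_mass y i j i = 0.
Proof. by rewrite /transfer_mass eqxx. Qed.

Let transfer_mass_j : transfer_mass y i j j = y j + y i.
Proof. by rewrite /transfer_mass (negbTE j_neq_i) eqxx. Qed.

Lemma transfer_mass_simplex : in_simplex y -> in_simplex (transfer_mass y i j).
Proof.
case=> y_ge0 sum_y; split=> [k | ].
  rewrite /transfer_mass; case: ifP => // _; case: ifP => // _.
  exact: addr_ge0.
rewrite sum_split2 transfer_mass_i transfer_mass_j (eq_bigr _ transfer_mass_other).
by rewrite -sum_y sum_split2; ring.
Qed.

Lemma sqdist_transfer_mass_lt a : a i = 0 -> 0 < y i -> y j < a j ->
  sqdist a (transfer_mass y i j) < sqdist a y.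
Proof.
move=> ai0 yi_gt0 yj_lt_aj; rewrite /sqdist !sum_split2 transfer_mass_i transfer_mass_j ai0.
rewrite (eq_bigr (fun k => (a k - y k) ^+ 2)) => [|k /transfer_mass_other -> //].
(* moving the mass t = y i from i to j changes the squared distance by -2 t (a j - y j) *)
rewrite -subr_gt0 in yj_lt_aj; nra.
Qed.

End TransferMass.

Lemma l0_transfer_mass_le y (i j : 'I_K) : 0 < y i -> (l0 (transfer_mass y i j) <= l0 y)%N.
Proof.
move=> yi_gt0; rewrite /l0 (cardsD1 i [set k | 0 < y k]) inE yi_gt0 add1n.
apply: leq_trans (subset_leq_card (_ : _ \subset j |: ([set k | 0 < y k] :\ i))) _.
  apply/subsetP => k; rewrite !inE /transfer_mass.
  by case: (k =P i) => [_|_]; [rewrite ltxx | case: (k == j)].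
by rewrite cardsU1 -add1n leq_add2r leq_b1.
Qed.

Lemma in_prox_eq0 gamma a y i : 0 < gamma -> in_simplex a -> a i = 0 ->
  in_prox gamma (@h_l0_simplex R K) a y -> y i = 0.
Proof.
move=> gamma_gt0 sa ai0 /(in_prox_l0_simplexP _ _ sa) [sy y_min].
have [[y_ge0 sum_y] [_ sum_a]] := (sy, sa).
apply/eqP; rewrite eq_le y_ge0 andbT leNgt; apply/negP => yi_gt0.
have [j yj_lt_aj] : exists j, y j < a j.
  by apply: (@exists_ltr_of_sum_eq _ _ a y i); rewrite ?sum_a ?sum_y ?ai0.
have j_neq_i : j != i.
  by apply: contraTneq yj_lt_aj => ->; rewrite ai0 -leNgt y_ge0.
have := y_min _ (transfer_mass_simplex j_neq_i sy).
rewrite leNgt /l0_objective => /negP; apply; apply: ltr_leD.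
  by rewrite ltr_pM2r ?invr_gt0 ?mulr_gt0 // sqdist_transfer_mass_lt.
by rewrite ler_nat l0_transfer_mass_le.
Qed.

End L0SimplexProx.

Theorem lemma3 (R : realType) (K : nat) (gamma : R) (a : 'I_K -> R) :
  0 < gamma ->
  in_simplex a ->
  (forall i j : 'I_K, (i <= j)%N -> a i <= a j) ->
  (* (i) *)
  (forall K0 : nat, (K0 < K)%N ->
     (forall n : nat, (n < K)%N -> gfun gamma a K0 <= gfun gamma a n) ->
     in_prox gamma (@h_l0_simplex R K) a (prox_candidate a K0))
  /\
  (* (ii) *)
  (forall i : 'I_K, a i = 0 ->
     forall y : 'I_K -> R, in_prox gamma (@h_l0_simplex R K) a y -> y i = 0).
Proof.
move=> gamma_gt0 sa a_mono; split.
- by move=> K0; apply: in_prox_prox_candidate.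
- by move=> i ai0 y; apply: in_prox_eq0.
Qed.
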